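(* Let $\alpha\in\mathbb{F}_q^*$ and let $\mathscr{C}\subseteq\mathbb{F}_q^n$ be a skew $\alpha$-cyclic code whose generator polynomial has positive degree. If $\mathscr{C}=\mathscr{C}^\perp$, then $n$ is even and $\alpha=\pm1$.
   Context: Let $\mathbb{F}_q$ be a finite field and $\theta$ a field automorphism of $\mathbb{F}_q$. For $\alpha\in\mathbb{F}_q^*$, a linear code $\mathscr{C}\subseteq\mathbb{F}_q^n$ is skew $\alpha$-cyclic if it is invariant under $\phi_{\alpha,\theta}(c_0,\dots,c_{n-1})=(\alpha\theta(c_{n-1}),\theta(c_0),\dots,\theta(c_{n-2}))$. Let $R=\mathbb{F}_q[x;\theta]$ be the skew polynomial ring with multiplication rule $xa=\theta(a)x$ for $a\in\mathbb{F}_q$. Identify $(a_0,\dots,a_{n-1})\in\mathbb{F}_q^n$ with the class of $\sum_i a_ix^i$ in the left $R$-module $R/R(x^n-\alpha)$. Under this identification a skew $\alpha$-cyclic code is a left $R$-submodule of the form $Rg/R(x^n-\alpha)$ for a unique monic $g\in R$ of minimal degree, which is a right divisor of $x^n-\alpha$ (the generator polynomial); the code has dimension $n-\deg g$. $\mathscr{C}^\perp$ denotes the dual code with respect to the standard bilinear form. *)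

From HB Require Import structures.
From mathcomp Require Import all_boot all_order all_algebra all_field.
Set Implicit Arguments. Unset Strict Implicit. Unset Printing Implicit Defensive.
Import GRing.Theory.
Local Open Scope ring_scope.

(* Skew polynomial ring F[x; theta]: the underlying additive group is {poly F}
   (coefficient sequences), with multiplication determined by x a = theta(a) x:
   (sum a_i x^i)(sum b_j x^j) = sum a_i theta^i(b_j) x^(i+j). *)
Definition skew_mul (F : fieldType) (theta : {rmorphism F -> F}) (p q : {poly F})
  : {poly F} :=
  \sum_(i < size p) \sum_(j < size q)
     (p`_i * iter i theta q`_j) *: 'X^(i + j).

Definition skew_shift (F : fieldType) (theta : {rmorphism F -> F}) (alpha : F)
  (n : nat) (c : 'rV[F]_n) : 'rV[F]_n :=
  \row_(i < n) ((if val i == 0%N then alpha else 1) * theta (c 0 (ord_pred i))).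

Definition linear_code (F : finFieldType) (n : nat) (C : {set 'rV[F]_n}) : Prop :=
  0 \in C /\ (forall a u v, u \in C -> v \in C -> a *: u + v \in C).

Definition skew_cyclic_code (F : finFieldType) (theta : {rmorphism F -> F})
  (alpha : F) (n : nat) (C : {set 'rV[F]_n}) : Prop :=
  linear_code C /\ (forall c, c \in C -> skew_shift theta alpha c \in C).

Definition dual_code (F : finFieldType) (n : nat) (C : {set 'rV[F]_n})
  : {set 'rV[F]_n} :=
  [set v | [forall c in C, (v *m c^T) 0 0 == 0]].

(* g is the generator polynomial of C: g is monic, right-divides x^n - alpha in
   F[x;theta], and C = R g / R(x^n - alpha), i.e. the codewords are exactly the
   coefficient vectors c (identified with sum_i c_i x^i, of degree < n) of the
   left multiples f g of g. *)
Definition skew_generator_poly (F : finFieldType) (theta : {rmorphism F -> F})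
  (alpha : F) (n : nat) (C : {set 'rV[F]_n}) (g : {poly F}) : Prop :=
  [/\ g \is monic,
      exists h : {poly F}, skew_mul theta h g = 'X^n - alpha%:P
    & forall c : 'rV[F]_n, c \in C <-> exists f : {poly F}, rVpoly c = skew_mul theta f g].

From HB Require Import structures.
From mathcomp Require Import all_boot all_order all_algebra all_field.
From mathcomp Require Import zify ring.

(* A self-dual code has dimension n - dim C = dim C, so n is even.  When
   n > 0 the code is nonzero, hence deg g < n and the left multiple
   x^(n-1-deg g) g is a codeword c with last coordinate 1.  Both c and its
   shift are self-orthogonal, and the shift changes the squared norm only
   through the wrapped-around coordinate:
   <phi c, phi c> = theta <c, c> + (alpha^2 - 1) theta(c_(n-1))^2,
   whence alpha^2 = 1.  When n = 0, g has positive degree and right-divides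
   the constant x^0 - alpha = 1 - alpha, so alpha = 1. *)

Set Implicit Arguments.
Unset Strict Implicit.
Unset Printing Implicit Defensive.
Import GRing.Theory.
Local Open Scope ring_scope.

Section SkewMul.

Variables (F : fieldType) (theta : {rmorphism F -> F}).

Lemma coef_skew_mul (p q : {poly F}) m :
  (skew_mul theta p q)`_m = \sum_(i < size p) \sum_(j < size q)
     (p`_i * iter i theta q`_j) * (m == i + j)%N%:R.
Proof.
rewrite /skew_mul coef_sum; apply: eq_bigr => i _; rewrite coef_sum.
by apply: eq_bigr => j _; rewrite coefZ coefXn.
Qed.

Lemma skew_mul0p (q : {poly F}) : skew_mul theta 0 q = 0.
Proof. by rewrite /skew_mul size_poly0 big_ord0. Qed.

Lemma iter_rmorph1 i : iter i theta 1 = 1.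
Proof. by elim: i => //= i ->; rewrite rmorph1. Qed.

Variables (f g : {poly F}).
Hypothesis g_monic : g \is monic.

Lemma coef_skew_mul_monic_high m :
  ((size f).-1 + (size g).-1 <= m)%N ->
  (skew_mul theta f g)`_m = (m == (size f).-1 + (size g).-1)%N%:R * lead_coef f.
Proof.
rewrite coef_skew_mul; move/monicP: g_monic; rewrite /lead_coef.
have := monic_neq0 g_monic; rewrite -size_poly_eq0.
case: (size g) => [|t] // _ g1.
case sf: (size f) => [|s] le_m.
  by rewrite big_ord0 nth_default ?mulr0 ?sf.
have coef0 i j : (i + j < s + t)%N -> (m == i + j)%N%:R = 0 :> F.
  by move=> ij; rewrite (_ : (m == i + j) = false) //; apply/eqP; lia.
rewrite big_ord_recr big1 /= => [|i _]; last first.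
  rewrite big1 // => j _; rewrite coef0 ?mulr0 //.
  by have := ltn_ord i; have := ltn_ord j; lia.
rewrite add0r big_ord_recr big1 /= => [|j _]; last first.
  by rewrite coef0 ?mulr0 // ltn_add2l.
by rewrite add0r g1 iter_rmorph1 mulr1 mulrC.
Qed.

Lemma size_skew_mul_monic :
  f != 0 -> size (skew_mul theta f g) = ((size f).-1 + size g)%N.
Proof.
move=> f_neq0; have g_gt0 : (0 < size g)%N by rewrite size_poly_gt0 monic_neq0.
have top := coef_skew_mul_monic_high.
apply/eqP; rewrite eqn_leq; apply/andP; split.
  apply/leq_sizeP => m le_m; rewrite top; last by lia.
  by rewrite (_ : (m == _) = false) ?mul0r //; apply/eqP; lia.
rewrite leqNgt -[size g](prednK g_gt0) addnS ltnS; apply/negP.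
move=> /leq_sizeP/(_ _ (leqnn _)); rewrite top // eqxx mul1r.
by move/eqP; rewrite lead_coef_eq0 (negPf f_neq0).
Qed.

Lemma lead_coef_skew_mul_monic : lead_coef (skew_mul theta f g) = lead_coef f.
Proof.
have [->|f_neq0] := eqVneq f 0; first by rewrite skew_mul0p.
have g_gt0 : (0 < size g)%N by rewrite size_poly_gt0 monic_neq0.
rewrite lead_coefE size_skew_mul_monic // coef_skew_mul_monic_high; last by lia.
by rewrite (_ : (_ == _) = true) ?mul1r //; apply/eqP; lia.
Qed.

End SkewMul.

Lemma skew_mul_monic_eqC (F : fieldType) (theta : {rmorphism F -> F})
    (f g : {poly F}) (a : F) :
  g \is monic -> (1 < size g)%N -> skew_mul theta f g = a%:P -> a = 0.
Proof.
move=> g_monic g_gt1 fg_a; apply/eqP; rewrite -polyC_eq0 -fg_a.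
have [->|f_neq0] := eqVneq f 0; first by rewrite skew_mul0p.
have := size_polyC_leq1 a; rewrite -fg_a size_skew_mul_monic //; lia.
Qed.

Lemma dot_rowE (F : fieldType) n (u v : 'rV[F]_n) :
  (u *m v^T) 0 0 = \sum_j u 0 j * v 0 j.
Proof. by rewrite !mxE; apply: eq_bigr => j _; rewrite mxE. Qed.

Lemma dot_skew_shift (F : fieldType) (theta : {rmorphism F -> F}) (alpha : F) n
    (c : 'rV[F]_n.+1) :
  let s := skew_shift theta alpha c in
  (s *m s^T) 0 0 =
    theta ((c *m c^T) 0 0) + (alpha ^+ 2 - 1) * theta (c 0 ord_max) ^+ 2.
Proof.
rewrite /=; pose a j := theta (c 0 (ord_pred j)).
have a0 : a ord0 = theta (c 0 ord_max).
  by congr (theta (c 0 _)); apply: val_inj; rewrite /= modn_small.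
have -> : theta ((c *m c^T) 0 0) = \sum_j a j ^+ 2.
  rewrite dot_rowE rmorph_sum (reindex_inj (@ord_pred_inj _)) /=.
  by apply: eq_bigr => j _; rewrite rmorphM.
rewrite dot_rowE !big_ord_recl /= !mxE /= -/(a _) -a0.
under eq_bigr do rewrite !mxE /= mul1r -/(a _).
ring.
Qed.

Section SelfDualCodes.

Variables (F : finFieldType) (n : nat).
Implicit Types C : {set 'rV[F]_n}.

Lemma linear_code_row_space C :
  linear_code C -> exists m (G : 'M[F]_(m, n)), forall v, (v \in C) = (v <= G)%MS.
Proof.
move=> [C0 C_lin]; exists #|C|, (\matrix_(i < #|C|) enum_val i) => v.
apply/idP/idP => [vC | /submxP[w ->]].
  by rewrite -(enum_rankK_in vC vC) -[X in (X <= _)%MS]rowK row_sub.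
rewrite mulmx_sum_row; apply: (big_ind (fun x => x \in C)) => //.
  by move=> x y xC yC; rewrite -[x]scale1r C_lin.
by move=> i _; rewrite -[_ *: _]addr0 C_lin // rowK enum_valP.
Qed.

Lemma dual_code_kermx m (G : 'M[F]_(m, n)) C :
  (forall v, (v \in C) = (v <= G)%MS) ->
  forall v, (v \in dual_code C) = (v <= kermx G^T)%MS.
Proof.
move=> CG v; rewrite inE sub_kermx; apply/forall_inP/eqP => [v_orth | vG0 c].
  apply/rowP => i; have rowC : row i G \in C by rewrite CG row_sub.
  rewrite [RHS]mxE; have /eqP <- := v_orth _ rowC.
  by rewrite !mxE; apply: eq_bigr => j _; rewrite !mxE.
by rewrite CG => /submxP[w ->]; rewrite trmx_mul mulmxA vG0 mul0mx mxE.
Qed.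

Lemma selfdual_code_even C : linear_code C -> C = dual_code C -> ~~ odd n.
Proof.
move=> /linear_code_row_space[m [G CG]] C_dual.
have GK (v : 'rV_n) : (v <= G)%MS = (v <= kermx G^T)%MS.
  by rewrite -CG -(dual_code_kermx CG) -C_dual.
have /eqmxP eqGK : (G == kermx G^T)%MS.
  by apply/andP; split; apply/row_subP => i; [rewrite -GK | rewrite GK]; exact: row_sub.
have := mxrank_ker G^T; rewrite -eqGK mxrank_tr => rkG.
have := rank_leq_col G => rkG_le.
by rewrite (_ : n = \rank G + \rank G)%N ?addnn ?odd_double //; lia.
Qed.

Lemma selfdual_code_self_orthogonal C c :
  C = dual_code C -> c \in C -> (c *m c^T) 0 0 = 0.
Proof.
by move=> C_dual cC; move: (cC); rewrite {1}C_dual inE => /forall_inP/(_ _ cC)/eqP.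
Qed.

End SelfDualCodes.

Lemma selfdual_code_neq0 (F : finFieldType) n (C : {set 'rV[F]_n.+1}) :
  C = dual_code C -> exists2 c, c \in C & c != 0.
Proof.
move=> C_dual; apply/exists_inP; apply: contraT.
rewrite negb_exists_in => /forall_inP C0.
have one_in_C : const_mx 1 \in C.
  rewrite C_dual inE; apply/forall_inP => c /C0; rewrite negbK => /eqP ->.
  by rewrite trmx0 mulmx0 mxE.
have /negPn/eqP/rowP/(_ ord0) := C0 _ one_in_C.
by rewrite !mxE => /eqP; rewrite oner_eq0.
Qed.

Section GeneratedCodes.

Variables (F : finFieldType) (theta : {rmorphism F -> F}) (n : nat).
Variables (C : {set 'rV[F]_n}) (g : {poly F}).
Hypotheses (g_monic : g \is monic)
  (C_gen : forall c, c \in C <-> exists f, rVpoly c = skew_mul theta f g).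

Lemma size_generator_leq c : c \in C -> c != 0 -> (size g <= n)%N.
Proof.
move=> /C_gen[f fg] c_neq0.
have [f0|f_neq0] := eqVneq f 0.
  by move: c_neq0; rewrite -[c]rVpolyK fg f0 skew_mul0p linear0 eqxx.
have := size_poly n (fun k => if insub k is Some i then c 0 i else 0).
rewrite -/(rVpoly c) fg.
by rewrite size_skew_mul_monic //; apply: leq_trans; rewrite leq_addl.
Qed.

End GeneratedCodes.

Lemma generated_code_last_coord1 (F : finFieldType) (theta : {rmorphism F -> F})
    n (C : {set 'rV[F]_n.+1}) (g : {poly F}) :
  g \is monic ->
  (forall c, c \in C <-> exists f, rVpoly c = skew_mul theta f g) ->
  (size g <= n.+1)%N -> exists2 c, c \in C & c 0 ord_max = 1.
Proof.
move=> g_monic C_gen g_le.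
pose p := skew_mul theta 'X^(n.+1 - size g) g.
have size_p : size p = n.+1.
  by rewrite size_skew_mul_monic ?monic_neq0 ?monicXn // size_polyXn /= subnK.
exists (poly_rV p : 'rV_n.+1).
  by apply/C_gen; exists 'X^(n.+1 - size g); rewrite poly_rV_K ?size_p.
rewrite mxE /= [X in p`_X](_ : n = (size p).-1) -?lead_coefE; last by rewrite size_p.
by rewrite lead_coef_skew_mul_monic ?lead_coefXn.
Qed.

Theorem mainTheorem3 (F : finFieldType) (theta : {rmorphism F -> F})
  (alpha : F) (n : nat) (C : {set 'rV[F]_n}) (g : {poly F}) :
  alpha != 0 ->
  skew_cyclic_code theta alpha C ->
  skew_generator_poly theta alpha C g ->
  (0 < (size g).-1)%N ->
  C = dual_code C ->
  ~~ odd n /\ (alpha = 1 \/ alpha = -1).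
Proof.
move=> _ [C_lin C_shift] [g_monic [h hg] C_gen] g_pos C_dual.
split; first exact: selfdual_code_even C_lin C_dual.
case: n => [|n] in C C_lin C_shift C_gen C_dual hg *.
  rewrite expr0 -polyC1 -polyCB in hg.
  have g_gt1 : (1 < size g)%N by move: g_pos; case: (size g) => [|[]].
  by left; apply/esym/subr0_eq; exact: skew_mul_monic_eqC g_monic g_gt1 hg.
have [c0 c0C c0_neq0] := selfdual_code_neq0 C_dual.
have g_le := size_generator_leq g_monic C_gen c0C c0_neq0.
have [c cC c_last] := generated_code_last_coord1 g_monic C_gen g_le.
have /= := dot_skew_shift theta alpha c.
rewrite (selfdual_code_self_orthogonal C_dual cC).
rewrite (selfdual_code_self_orthogonal C_dual (C_shift _ cC)) c_last.
rewrite rmorph0 rmorph1 expr1n mulr1 add0r => /esym/eqP.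
by rewrite subr_eq0 sqrf_eq1 => /orP[] /eqP; [left | right].
Qed.
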